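(* Let $\Gamma\leq\mathrm{PSL}_2(\mathbb{R})$ be an infinitely generated Fuchsian group containing no elliptic elements. Then $\Gamma$ has no finite geodesic cover (corresponding to any locally finite fundamental domain).
   Context: $\Gamma$ acts on the upper half plane $\mathbb{H}^2$ by Möbius transformations; $d_{\mathbb{H}^2}$ is the hyperbolic metric. A fundamental domain of $\Gamma$ is a closed set $F\subset\mathbb{H}^2$ whose $\Gamma$-translates cover $\mathbb{H}^2$ and whose interior contains no two distinct points of the same $\Gamma$-orbit; it is locally finite if every compact subset of $\mathbb{H}^2$ meets only finitely many translates $\gamma\cdot F$. A subset $\Gamma_0\subset\Gamma$ containing the identity is a geodesic cover of $\Gamma$ corresponding to $F$ if for all $p,q\in F$, $\min_{\gamma\in\Gamma}d_{\mathbb{H}^2}(p,\gamma\cdot q)=\min_{\gamma\in\Gamma_0}d_{\mathbb{H}^2}(p,\gamma\cdot q)$. *)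

From HB Require Import structures.
From mathcomp Require Import all_boot all_order all_algebra.
From mathcomp Require Import all_classical all_reals all_analysis.
Set Implicit Arguments. Unset Strict Implicit. Unset Printing Implicit Defensive.
Import Order.TTheory GRing.Theory Num.Theory.
Import numFieldNormedType.Exports.
Local Open Scope classical_set_scope.
Local Open Scope ring_scope.

Section Defs.
Variable R : realType.

Definition mA (g : 'M[R]_2) : R := g ord0 ord0.
Definition mB (g : 'M[R]_2) : R := g ord0 ord_max.
Definition mC (g : 'M[R]_2) : R := g ord_max ord0.
Definition mD (g : 'M[R]_2) : R := g ord_max ord_max.

(* Points of the plane R^2 = C, z = (x, y) = x + i y; upper half plane. *)
Definition H2 : set (R * R) := [set z | 0 < z.2].

(* Moebius action z |-> (a z + b) / (c z + d) written in real coordinates. *)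
Definition mobius (g : 'M[R]_2) (z : R * R) : R * R :=
  let: (x, y) := z in
  let den := (mC g * x + mD g) ^+ 2 + (mC g * y) ^+ 2 in
  (((mA g * x + mB g) * (mC g * x + mD g) + mA g * mC g * y ^+ 2) / den,
   (mA g * mD g - mB g * mC g) * y / den).

Definition arcosh (t : R) : R := ln (t + Num.sqrt (t ^+ 2 - 1)).

Definition dH (z w : R * R) : R :=
  arcosh (1 + ((z.1 - w.1) ^+ 2 + (z.2 - w.2) ^+ 2) / (2 * z.2 * w.2)).

(* PSL_2(R) = SL_2(R)/{+-1}.  A subgroup of PSL_2(R) is represented by its
   full preimage in SL_2(R): a subgroup of SL_2(R) containing -1. *)
Definition is_PSL2_subgroup (G : set 'M[R]_2) : Prop :=
  [/\ (forall g, G g -> \det g = 1),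
      G 1%:M,
      (forall g h, G g -> G h -> G (g *m h)),
      (forall g, G g -> G (invmx g)) &
      (forall g, G g -> G (- g))].

(* Discreteness in PSL_2(R) (quotient topology of the matrix topology):
   every element is isolated, i.e. near a representative g the only elements
   of the group are the representatives +-g of the same class. *)
Definition discrete_PSL2 (G : set 'M[R]_2) : Prop :=
  forall g, G g -> \forall h \near g, G h -> h = g \/ h = - g.

Definition Fuchsian (G : set 'M[R]_2) : Prop :=
  is_PSL2_subgroup G /\ discrete_PSL2 G.

(* Elements of PSL_2(R) generated by a list of matrices
   (modulo the identification g ~ -g). *)
Inductive generated (L : seq 'M[R]_2) : 'M[R]_2 -> Prop :=
| gen_one : generated L 1%:M
| gen_opp g : generated L g -> generated L (- g)
| gen_mul h g : h \in L -> generated L g -> generated L (h *m g)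
| gen_mulV h g : h \in L -> generated L g -> generated L (invmx h *m g).

Definition finitely_generated (G : set 'M[R]_2) : Prop :=
  exists L : seq 'M[R]_2, (forall h, h \in L -> G h) /\
    (forall g, G g -> generated L g).

Definition elliptic (g : 'M[R]_2) : Prop :=
  g <> 1%:M /\ g <> - 1%:M /\ `|\tr g| < 2.

Definition translate (g : 'M[R]_2) (F : set (R * R)) : set (R * R) :=
  mobius g @` F.

Definition fundamental_domain (G : set 'M[R]_2) (F : set (R * R)) : Prop :=
  [/\ F `<=` H2,
      closure F `&` H2 `<=` F,
      (forall z, H2 z -> exists g w, G g /\ F w /\ z = mobius g w) &
      (forall z w g, (interior F) z -> (interior F) w -> G g ->
          mobius g z = w -> z = w)].

Definition locally_finite (G : set 'M[R]_2) (F : set (R * R)) : Prop :=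
  forall K : set (R * R), compact K -> K `<=` H2 ->
    exists L : seq 'M[R]_2, forall g, G g -> translate g F `&` K !=set0 ->
      exists2 h, h \in L & (g = h \/ g = - h).

Definition geodesic_cover (G G0 : set 'M[R]_2) (F : set (R * R)) : Prop :=
  [/\ G0 `<=` G, G0 1%:M &
      forall p q, F p -> F q ->
        exists2 g0, G0 g0 & forall g, G g -> dH p (mobius g0 q) <= dH p (mobius g q)].

End Defs.

From HB Require Import structures.
From mathcomp Require Import all_boot all_order all_algebra.
From mathcomp Require Import all_classical all_reals all_analysis.
From mathcomp Require Import ring lra.
Import Order.TTheory GRing.Theory Num.Theory.
Import numFieldNormedType.Exports.
Local Open Scope classical_set_scope.
Local Open Scope ring_scope.

(* Suppose the Fuchsian group G without elliptic elements has
   a finite geodesic cover L with respect to a locally finite fundamental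
   domain F.  We show that L generates G, contradicting infinite generation.
   1. Adjacent tiles differ by L: if h F and g F meet, say h w1 = g w2, then
      k = h^-1 g sends w2 to w1; the cover gives g0 in L with g0 w2 as close to
      w1 as k w2 is, i.e. g0 w2 = w1; so k^-1 g0 fixes w2 and, since an
      element of SL_2(R) fixing a point of H2 is +-1 or elliptic, g = +- h g0.
   2. Propagation: a property of group elements that holds for 1 and passes
      between adjacent tiles holds on all of G.  Indeed the tiles of elements
      with the property and those without are disjoint, cover H2 and are both
      closed in H2 (a locally finite union of closed sets is closed); by
      connectedness of H2 the first union is all of H2.
   Applying 2 to "is generated by L" with step 1 proves the theorem. *)

Section FiniteGeodesicCover.
Set Implicit Arguments.
Unset Strict Implicit.
Variable R : realType.
Implicit Types (g h k : 'M[R]_2) (z w : R * R).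

Lemma lift0_ord0 : lift ord0 (ord0 : 'I_1) = ord_max :> 'I_2.
Proof. exact/val_inj. Qed.

Lemma entries_mul g h :
  [/\ mA (g *m h) = mA g * mA h + mB g * mC h,
      mB (g *m h) = mA g * mB h + mB g * mD h,
      mC (g *m h) = mC g * mA h + mD g * mC h &
      mD (g *m h) = mC g * mB h + mD g * mD h].
Proof.
by split; rewrite /mA /mB /mC /mD !mxE !big_ord_recl big_ord0 !addr0 ?lift0_ord0.
Qed.

Lemma entries_opp g :
  [/\ mA (- g) = - mA g, mB (- g) = - mB g, mC (- g) = - mC g & mD (- g) = - mD g].
Proof. by split; rewrite /mA /mB /mC /mD !mxE. Qed.

Lemma entries_one :
  [/\ mA (1%:M : 'M[R]_2) = 1, mB (1%:M : 'M[R]_2) = 0,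
      mC (1%:M : 'M[R]_2) = 0 & mD (1%:M : 'M[R]_2) = 1].
Proof. by split; rewrite /mA /mB /mC /mD !mxE. Qed.

Lemma det_entries g : \det g = mA g * mD g - mB g * mC g.
Proof.
rewrite (expand_det_row g ord0) !big_ord_recl big_ord0 addr0 /cofactor !det_mx11.
rewrite /mA /mB /mC /mD !mxE /=.
have lift_first (k : 'I_1) : lift ord0 k = ord_max :> 'I_2.
  by case: k => -[|//] ?; apply/val_inj.
have lift_last (k : 'I_1) : lift ord_max k = ord0 :> 'I_2.
  by case: k => -[|//] ?; apply/val_inj.
rewrite !lift_first !lift_last /bump /= expr0 expr1 mul1r mulN1r; ring.
Qed.

Lemma trace_entries g : \tr g = mA g + mD g.
Proof. by rewrite /mxtrace !big_ord_recl big_ord0 addr0 lift0_ord0. Qed.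

Lemma matrix_entriesP g h :
  mA g = mA h -> mB g = mB h -> mC g = mC h -> mD g = mD h -> g = h.
Proof.
rewrite /mA /mB /mC /mD => eA eB eC eD; apply/matrixP => i j.
have ord2 (k : 'I_2) : k = ord0 \/ k = ord_max.
  by case: k => -[|[|//]] ?; [left|right]; apply/val_inj.
by case: (ord2 i) => ->; case: (ord2 j) => ->.
Qed.

Lemma det1_unit g : \det g = 1 -> g \in unitmx.
Proof. by move=> dg; rewrite unitmxE dg unitr1. Qed.

Lemma det1_inv g : \det g = 1 -> \det (invmx g) = 1.
Proof. by move=> dg; rewrite det_inv dg invr1. Qed.

Definition mobius_den g z := (mC g * z.1 + mD g) ^+ 2 + (mC g * z.2) ^+ 2.

Lemma mobius_den_gt0 g z : \det g = 1 -> H2 z -> 0 < mobius_den g z.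
Proof.
rewrite det_entries /mobius_den /H2 => dg hy.
rewrite lt0r addr_ge0 ?sqr_ge0 // andbT paddr_eq0 ?sqr_ge0 //.
apply/negP => /andP[]; rewrite !sqrf_eq0 mulf_eq0 (gt_eqF hy) orbF => hd /eqP hc.
move: hd; rewrite hc mul0r add0r => /eqP hd; move: dg; rewrite hd hc !mulr0 subr0.
by move=> /eqP; rewrite eq_sym oner_eq0.
Qed.

Lemma mobius_H2 g z : \det g = 1 -> H2 z -> H2 (mobius g z).
Proof.
move=> dg hz; have := mobius_den_gt0 dg hz; move: hz.
case: z => x y; rewrite /H2 /mobius_den /= => hy hD.
by rewrite -det_entries dg mul1r divr_gt0.
Qed.

Lemma mobius_opp g z : mobius (- g) z = mobius g z.
Proof.
case: z => x y; rewrite /mobius; have [-> -> -> ->] := entries_opp g.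
by congr (_, _); congr (_ * _^-1); ring.
Qed.

Lemma mobius_one z : mobius 1%:M z = z.
Proof.
case: z => x y; rewrite /mobius; have [-> -> -> ->] := entries_one.
by congr (_, _); rewrite !(mul0r, mulr0, mul1r, mulr1, add0r, addr0, subr0) expr0n
  /= addr0 expr1n divr1.
Qed.

Lemma mobius_mul g h z : \det g = 1 -> \det h = 1 -> H2 z ->
  mobius (g *m h) z = mobius g (mobius h z).
Proof.
move=> dg dh hz.
have Dh := mobius_den_gt0 dh hz.
have Dg := mobius_den_gt0 dg (mobius_H2 dh hz).
have Dgh : 0 < mobius_den (g *m h) z by rewrite mobius_den_gt0 // det_mulmx dg dh mulr1.
move: Dh Dg Dgh; rewrite /mobius_den /mobius; case: z hz => x y _.
have [-> -> -> ->] := entries_mul g h.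
move: (mA g) (mB g) (mC g) (mD g) (mA h) (mB h) (mC h) (mD h) => a b c d a' b' c' d'.
rewrite /= => /lt0r_neq0 n1 /lt0r_neq0 n2 /lt0r_neq0 n3.
set N := (a' * x + b') * (c' * x + d') + a' * c' * y ^+ 2 in n2 *.
set M := (a' * d' - b' * c') * y in n2 *.
set D := (c' * x + d') ^+ 2 + (c' * y) ^+ 2 in n1 n2 *.
have n2' : (c * N + d * D) ^+ 2 + (c * M) ^+ 2 != 0.
  have -> : (c * N + d * D) ^+ 2 + (c * M) ^+ 2 =
     D ^+ 2 * ((c * (N / D) + d) ^+ 2 + (c * (M / D)) ^+ 2).
    by clearbody N M D; field.
  by rewrite mulf_neq0 // expf_neq0.
rewrite {}/N {}/M {}/D in n1 n2 n2' *.
by congr (_, _); field; rewrite n1 n2' n3.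
Qed.

Lemma mobius_invK g z : \det g = 1 -> H2 z -> mobius (invmx g) (mobius g z) = z.
Proof.
by move=> dg hz; rewrite -mobius_mul ?det1_inv // mulVmx ?det1_unit // mobius_one.
Qed.

Lemma mobius_Kinv g z : \det g = 1 -> H2 z -> mobius g (mobius (invmx g) z) = z.
Proof.
by move=> dg hz; rewrite -mobius_mul ?det1_inv // mulmxV ?det1_unit // mobius_one.
Qed.

Lemma mobius_continuous g z : \det g = 1 -> H2 z -> {for z, continuous (mobius g)}.
Proof.
move=> dg hz; have := mobius_den_gt0 dg hz; rewrite /mobius_den => /lt0r_neq0 hD.
have -> : mobius g = fun p : R * R =>
  (((mA g * p.1 + mB g) * (mC g * p.1 + mD g) + mA g * mC g * (p.2 * p.2)) *
     ((mC g * p.1 + mD g) * (mC g * p.1 + mD g) + (mC g * p.2) * (mC g * p.2))^-1,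
   ((mA g * mD g - mB g * mC g) * p.2) *
     ((mC g * p.1 + mD g) * (mC g * p.1 + mD g) + (mC g * p.2) * (mC g * p.2))^-1).
  by apply: funext => -[x y]; rewrite /mobius !expr2.
have cfst : {for z, continuous (fun p : R * R => p.1)} by exact: cvg_fst.
have csnd : {for z, continuous (fun p : R * R => p.2)} by exact: cvg_snd.
have cpair (f1 f2 : R * R -> R) : {for z, continuous f1} -> {for z, continuous f2} ->
    {for z, continuous (fun p => (f1 p, f2 p))}.
  by move=> c1 c2; exact: (cvg_pair c1 c2).
apply: cpair; apply: continuousM;
  repeat first [ apply: continuousM | apply: continuousD | exact: cfst
               | exact: csnd | exact: cvg_cst | apply: continuousV ];
  by rewrite -!expr2.
Qed.

Lemma fixed_point_entries (a b c d x y : R) : a * d - b * c = 1 -> 0 < y ->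
  0 < (c * x + d) ^+ 2 + (c * y) ^+ 2 ->
  ((a * x + b) * (c * x + d) + a * c * y ^+ 2) / ((c * x + d) ^+ 2 + (c * y) ^+ 2) = x ->
  (a * d - b * c) * y / ((c * x + d) ^+ 2 + (c * y) ^+ 2) = y ->
  (c = 0 /\ b = 0 /\ a = d /\ (d = 1 \/ d = -1)) \/ `|a + d| < 2.
Proof.
move=> det1 hy hD e1 e2.
set Dp := (c * x + d) ^+ 2 + (c * y) ^+ 2 in hD e1 e2.
have D1 : Dp = 1.
  move/(congr1 (fun t => t * Dp)) : e2; rewrite divfK ?gt_eqF // det1 mul1r => e2.
  by apply: (mulfI (lt0r_neq0 hy)); rewrite -e2 mulr1.
rewrite D1 divr1 in e1.
have ea : a = 2 * c * x + d.
  apply: (mulIf (lt0r_neq0 hy)); apply/eqP; rewrite -subr_eq0.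
  have -> : a * y - (2 * c * x + d) * y = a * y * (1 - Dp) + c * y *
     (((a * x + b) * (c * x + d) + a * c * y ^+ 2) - x) + (c * x + d) * y * (a * d - b * c - 1).
    by rewrite /Dp; ring.
  by rewrite D1 e1 det1 !subrr !mulr0 !addr0.
have eb : a * x + b = x * (c * x + d) - y * (c * y).
  apply/eqP; rewrite -subr_eq0.
  have -> : a * x + b - (x * (c * x + d) - y * (c * y)) = (a * x + b) * (1 - Dp) + (c * x + d) *
     (((a * x + b) * (c * x + d) + a * c * y ^+ 2) - x) - c * y * y * (a * d - b * c - 1).
    by rewrite /Dp; ring.
  by rewrite D1 e1 det1 !subrr !mulr0 subr0 addr0.
have [c0|cn0] := eqVneq c 0.
  left; have d2 : d ^+ 2 = 1 by rewrite -D1 /Dp c0; ring.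
  have eb' : b = x * (c * x + d) - y * (c * y) - a * x by rewrite -eb; ring.
  split=> //; split; first by rewrite eb' ea c0; ring.
  split; first by rewrite ea c0; ring.
  have /orP[/eqP|/eqP] : (d == 1) || (d == -1) by rewrite -sqrf_eq1 d2.
    by left.
  by right.
right; rewrite ltr_norml.
have hc2 : 0 < (c * y) ^+ 2 by rewrite exprn_even_gt0 // mulf_neq0 // lt0r_neq0.
have -> : a + d = 2 * (c * x + d) by rewrite ea; ring.
by move: D1; rewrite /Dp => D1; apply/andP; split; nra.
Qed.

Lemma fixed_point_trace k w : \det k = 1 -> H2 w -> mobius k w = w ->
  k = 1%:M \/ k = - 1%:M \/ `|\tr k| < 2.
Proof.
move=> dk hw; have hD := mobius_den_gt0 dk hw; move: hw hD dk.
rewrite /H2 /mobius_den /mobius trace_entries det_entries; case: w => x y /= hy hD dk [e1 e2].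
have [e1' e2' e3' e4'] := entries_one.
have [[c0 [b0 [ad [d1|d1]]]]|] := fixed_point_entries dk hy hD e1 e2; last by right; right.
  by left; apply: matrix_entriesP; rewrite ?e1' ?e2' ?e3' ?e4' // ad.
have [n1 n2 n3 n4] := entries_opp (1%:M : 'M[R]_2).
by right; left; apply: matrix_entriesP; rewrite ?n1 ?n2 ?n3 ?n4 ?e1' ?e2' ?e3' ?e4' ?oppr0 // ?ad.
Qed.

Lemma stabilizer_trivial (G : set 'M[R]_2) k w :
  is_PSL2_subgroup G -> (forall g, G g -> ~ elliptic g) ->
  G k -> H2 w -> mobius k w = w -> k = 1%:M \/ k = - 1%:M.
Proof.
move=> [Gdet _ _ _ _] noell Gk hw fix_w.
have [|[|small_trace]] := fixed_point_trace (Gdet _ Gk) hw fix_w; [by left|by right|].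
have [->|k1] := pselect (k = 1%:M); first by left.
have [->|kN1] := pselect (k = - 1%:M); first by right.
by case: (noell _ Gk).
Qed.

Lemma dH_refl z : dH z z = 0.
Proof.
by rewrite /dH /arcosh !subrr expr0n /= addr0 mul0r addr0 expr1n subrr sqrtr0 addr0 ln1.
Qed.

Lemma dH_le0 z w : H2 z -> H2 w -> dH z w <= 0 -> z = w.
Proof.
rewrite /H2 /dH /arcosh => hz hw.
have [|n0] := eqVneq ((z.1 - w.1) ^+ 2 + (z.2 - w.2) ^+ 2) 0.
  move=> /eqP; rewrite paddr_eq0 ?sqr_ge0 // !sqrf_eq0 !subr_eq0 => /andP[/eqP e1 /eqP e2] _.
  by case: z e1 e2 {hz} => ? ?; case: w {hw} => ? ? /= -> ->.
set n := (z.1 - w.1) ^+ 2 + (z.2 - w.2) ^+ 2 in n0 *.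
have ratio_gt0 : 0 < n / (2 * z.2 * w.2).
  by rewrite divr_gt0 ?mulr_gt0 // lt0r n0 addr_ge0 ?sqr_ge0.
set t := 1 + _.
have t_gt1 : 1 < t by rewrite /t ltrDl.
have : 0 < ln (t + Num.sqrt (t ^+ 2 - 1)).
  by apply: ln_gt0; apply: (lt_le_trans t_gt1); rewrite lerDl sqrtr_ge0.
by move=> h /(lt_le_trans h); rewrite ltxx.
Qed.

Lemma translate_opp h (F : set (R * R)) : translate (- h) F = translate h F.
Proof. by apply: eq_imagel => x _; rewrite mobius_opp. Qed.

Lemma translate_closed g (F : set (R * R)) : \det g = 1 -> F `<=` @H2 R ->
  closure F `&` @H2 R `<=` F -> closure (translate g F) `&` @H2 R `<=` translate g F.
Proof.
move=> dg FH cF z [cz hz].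
have dgi := det1_inv dg.
set w := mobius (invmx g) z.
suff Fw : F w by exists w => //; rewrite /w mobius_Kinv.
apply: cF; split; last exact: mobius_H2.
move=> B /(mobius_continuous dgi hz) /cz [v [[f Ff <-] /= hv]].
by exists f; split=> //; rewrite mobius_invK // in hv; apply: FH.
Qed.

Lemma near_avoid_translates (F : set (R * R)) (s : seq 'M[R]_2) z :
  (forall h, h \in s -> ~ closure (translate h F) z) ->
  \forall w \near z, forall h, h \in s -> ~ translate h F w.
Proof.
elim: s => [|h s IH] avoid; first by apply: filterE => w h; rewrite in_nil.
have [B [hB dB]] : exists B, nbhs z B /\ translate h F `&` B = set0.
  apply: contra_notP (avoid h (mem_head _ _)) => noB B hB.
  apply: contra_notP noB => /set0P/negP; rewrite negbK => /eqP dB.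
  by exists B.
have IH' := IH (fun h' hs => avoid h' (mem_behead (s := h :: s) hs)).
apply: filterS (filterI hB IH') => w [Bw IHw] h'; rewrite in_cons => /orP[/eqP->|hs].
  by move=> Tw; have : (translate h F `&` B) w by []; rewrite dB.
exact: IHw.
Qed.

Definition tiles (S : set 'M[R]_2) (F : set (R * R)) := \bigcup_(g in S) translate g F.

Lemma tiles_closed (G S : set 'M[R]_2) (F : set (R * R)) :
  (forall g, G g -> \det g = 1) -> F `<=` @H2 R -> closure F `&` @H2 R `<=` F ->
  locally_finite G F -> S `<=` G ->
  closure (tiles S F) `&` @H2 R `<=` tiles S F.
Proof.
move=> Gdet FH cF LF SG z [cz hz]; apply: contrapT => notin.
have z2_gt0 : 0 < z.2 := hz.
have r_gt0 : 0 < z.2 / 2 by rewrite divr_gt0.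
set r := z.2 / 2 in r_gt0.
pose K := `[z.1 - r, z.1 + r] `*` `[z.2 - r, z.2 + r].
have cK : compact K by apply: compact_setX; apply: segment_compact.
have KH : K `<=` @H2 R.
  move=> p [_ /=]; rewrite in_itv /= => /andP[h1 _]; rewrite /H2.
  by apply: (lt_le_trans _ h1); rewrite /r; lra.
have nK : nbhs z K.
  exists (`]z.1 - r, z.1 + r[%classic, `]z.2 - r, z.2 + r[%classic).
    by split; apply: near_in_itvoo; rewrite in_itv /=; apply/andP; split; lra.
  by move=> p [/=]; rewrite !in_itv /= => /andP[? ?] /andP[? ?]; split;
    rewrite /= in_itv /= !ltW.
have [L hL] := LF K cK KH.
pose LS := [seq h <- L | `[< exists2 g, S g & g = h \/ g = - h >]].
have far : \forall w \near z, forall h, h \in LS -> ~ translate h F w.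
  apply: near_avoid_translates => h; rewrite mem_filter => /andP[/asboolP[g Sg gh] _].
  have -> : translate h F = translate g F by case: gh => ->; rewrite ?translate_opp.
  by move=> cl; apply: notin; exists g => //; apply: translate_closed => //; apply: Gdet; apply: SG.
have [v [[g Sg Tv] [Kv far_v]]] := cz _ (filterI nK far).
have [h hL' gh] := hL g (SG _ Sg) (ex_intro _ v (conj Tv Kv)).
apply: (far_v h); first by rewrite mem_filter hL' andbT; apply/asboolP; exists g.
by case: gh Tv => ->; rewrite ?translate_opp.
Qed.

Lemma H2_connected : connected (@H2 R).
Proof.
pose seg z t : R * R := (t * z.1, 1 - t + t * z.2).
have -> : @H2 R = \bigcup_(z in @H2 R) (seg z @` `[0, 1]%classic).
  apply/seteqP; split.
    move=> z hz; exists z => //; exists 1; first by rewrite /= in_itv /= lexx ler01.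
    by rewrite /seg mul1r subrr add0r mul1r; case: z {hz}.
  move=> p [z hz [t]]; rewrite /= in_itv /= => /andP[t0 t1] <-.
  rewrite /H2 /seg /=; move: hz; rewrite /H2 => hz.
  have : 0 <= t * z.2 by rewrite mulr_ge0 // ltW.
  have [->|n1] := eqVneq t 1; first by rewrite subrr add0r mul1r.
  have : t < 1 by rewrite lt_neqAle n1 t1.
  lra.
apply: bigcup_connected.
  exists (0, 1) => z hz; exists 0; first by rewrite /= in_itv /= lexx ler01.
  by rewrite /seg !mul0r subr0 addr0.
move=> z hz; apply: connected_continuous_connected.
  by apply/connected_intervalP; apply: interval_is_interval.
apply: continuous_subspaceT => t.
have first : {for t, continuous (fun t : R => t * z.1)}.
  by apply: continuousM; [exact: cvg_id | exact: cvg_cst].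
have second : {for t, continuous (fun t : R => 1 - t + t * z.2)}.
  apply: continuousD; last by apply: continuousM; [exact: cvg_id | exact: cvg_cst].
  by apply: continuousD; [exact: cvg_cst | exact: (continuousN cvg_id)].
exact: (cvg_pair first second).
Qed.

Lemma adjacency_propagation (G : set 'M[R]_2) (F : set (R * R))
    (P : 'M[R]_2 -> Prop) :
  is_PSL2_subgroup G -> fundamental_domain G F -> locally_finite G F ->
  P 1%:M ->
  (forall h g, G h -> G g -> P h -> translate h F `&` translate g F !=set0 -> P g) ->
  forall g, G g -> P g.
Proof.
move=> [Gdet G1 _ _ _] [FH cF cover _] LF P1 step.
have [w0 Fw0] : exists w, F w.
  by have [_ [w [_ [Fw _]]]] := cover (0, 1) ltr01; exists w.
pose good := [set h | G h /\ P h]; pose bad := [set h | G h /\ ~ P h].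
have good_H2 : tiles good F `<=` @H2 R.
  by move=> x [h [Gh _] [w Fw <-]]; apply: mobius_H2 (Gdet _ Gh) (FH _ Fw).
have good_bad : forall x, tiles good F x -> ~ tiles bad F x.
  by move=> x [h [Gh Ph] Tx] [g [Gg nPg] Tx']; apply/nPg/(step h); rewrite //; exists x.
have goodE : tiles good F = @H2 R.
  apply: H2_connected.
  - by exists w0, 1%:M => //; exists w0 => //; rewrite mobius_one.
  - exists (~` closure (tiles bad F)); first exact/closed_openC/closed_closure.
    apply/seteqP; split.
      move=> x gx; split; first exact: good_H2.
      move=> cx; apply: (good_bad x gx).
      apply: (tiles_closed Gdet FH cF LF); [by move=> h [] | split=> //; exact: good_H2].
    move=> x [Hx ncx]; have [g [w [Gg [Fw x_gw]]]] := cover x Hx; rewrite x_gw in ncx *.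
    have [Pg|nPg] := pselect (P g); first by exists g; [split | exists w].
    by exfalso; apply: ncx; apply: subset_closure; exists g; [split | exists w].
  - exists (closure (tiles good F)); first exact: closed_closure.
    apply/seteqP; split; first by move=> x gx; split; [apply: good_H2|apply: subset_closure].
    move=> x [Hx cx].
    by apply: (tiles_closed Gdet FH cF LF); [by move=> h []|split].
move=> g Gg.
have : tiles good F (mobius g w0) by rewrite goodE; apply: mobius_H2 (Gdet _ Gg) (FH _ Fw0).
move=> [h [Gh Ph] Th].
by apply: (step h g Gh Gg Ph); exists (mobius g w0); split=> //; exists w0.
Qed.

Lemma geodesic_cover_adjacent (G G0 : set 'M[R]_2) (F : set (R * R)) h g :
  is_PSL2_subgroup G -> (forall g, G g -> ~ elliptic g) -> F `<=` @H2 R ->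
  geodesic_cover G G0 F -> G h -> G g ->
  translate h F `&` translate g F !=set0 ->
  exists2 g0, G0 g0 & g = h *m g0 \/ g = - (h *m g0).
Proof.
move=> PG noell FH [G0G _ nearest] Gh Gg [_ [[w1 Fw1 <-] [w2 Fw2 e]]].
have [Gdet _ GM GI _] := PG.
have [hw1 hw2] := conj (FH _ Fw1) (FH _ Fw2).
pose k := invmx h *m g.
have Gk : G k by apply: GM => //; apply: GI.
have [dh dg dk] := And3 (Gdet _ Gh) (Gdet _ Gg) (Gdet _ Gk).
have k_w2 : mobius k w2 = w1 by rewrite mobius_mul ?det1_inv // e mobius_invK.
have [g0 G0g0 g0_nearest] := nearest _ _ Fw1 Fw2.
have dg0 := Gdet _ (G0G _ G0g0).
have g0_w2 : w1 = mobius g0 w2.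
  apply: dH_le0 => //; first exact: mobius_H2.
  by have := g0_nearest _ Gk; rewrite k_w2 dH_refl.
pose m := invmx k *m g0.
have m_w2 : mobius m w2 = w2 by rewrite mobius_mul ?det1_inv // -g0_w2 -k_w2 mobius_invK.
have Gm : G m by apply: GM; [apply: GI | apply: G0G].
have eg0 : g0 = k *m m by rewrite /m mulKVmx ?det1_unit.
have eg : g = h *m k by rewrite /k mulKVmx ?det1_unit.
exists g0 => //; rewrite eg eg0.
case: (stabilizer_trivial PG noell Gm hw2 m_w2) => ->.
  by left; rewrite mulmx1.
by right; rewrite mulmxN mulmx1 mulmxN opprK.
Qed.

Lemma generated_mulmx (L : seq 'M[R]_2) a b :
  generated L a -> generated L b -> generated L (a *m b).
Proof.
move=> ga gb; elim: ga => [|g _ IH|h g hL _ IH|h g hL _ IH].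
- by rewrite mul1mx.
- by rewrite mulNmx; apply: gen_opp.
- by rewrite -mulmxA; apply: gen_mul.
- by rewrite -mulmxA; apply: gen_mulV.
Qed.

Lemma generated_mem (L : seq 'M[R]_2) h : h \in L -> generated L h.
Proof. by move=> hL; rewrite -(mulmx1 h); apply: gen_mul => //; apply: gen_one. Qed.

End FiniteGeodesicCover.

Theorem corollary2p6 (R : realType) (G : set 'M[R]_2) :
  Fuchsian G -> ~ finitely_generated G ->
  (forall g, G g -> ~ elliptic g) ->
  forall F : set (R * R), fundamental_domain G F -> locally_finite G F ->
  ~ (exists G0 : set 'M[R]_2, finite_set G0 /\ geodesic_cover G G0 F).
Proof.
move=> [PG _] not_fg noell F FD LF [G0 [finG0 cover]].
have [L eL] := (finite_seqP G0).1 finG0.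
have [G0G _ _] := cover.
apply: not_fg; exists L; split=> [h hL|]; first by apply: G0G; rewrite eL.
apply: (adjacency_propagation PG FD LF (gen_one L)) => h g Gh Gg gen_h meet.
have [FH _ _ _] := FD.
have [g0 G0g0 g_eq] := geodesic_cover_adjacent PG noell FH cover Gh Gg meet.
have gen_g0 : generated L g0 by apply: generated_mem; move: G0g0; rewrite eL.
by case: g_eq => ->; [|apply: gen_opp]; apply: generated_mulmx.
Qed.
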